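(* Let $G$ be an unweighted graph (loops allowed, no parallel edges) with no isolated vertices, with adjacency matrix $A_G$ (diagonal entry $1$ at looped vertices), and let $Q_G(\mathbf{x})=\tfrac12\mathbf{x}^TA_G\mathbf{x}$. The following are equivalent: (1) $G$ is antiferromagnetic; (2) $Q_G$ is Lorentzian; (3) $\operatorname{supp}(Q_G)$ is M-convex; (4) there exist disjoint vertex sets $V_1,V_2$ with $V_1\cup V_2=V(G)$ such that $V_1$ induces a complete multipartite graph (with no loops) and $V_2$ consists of looped vertices each adjacent to all vertices of $G$.
   Context: A symmetric nonnegative matrix (or the corresponding graph) is antiferromagnetic if it has at most one positive eigenvalue, counted with multiplicity. The support $\operatorname{supp}(f)\subseteq\mathbb{N}_0^n$ of a polynomial $f$ is the set of exponent vectors of monomials with nonzero coefficient. A set $S\subseteq\mathbb{N}_0^n$ is M-convex if for all $\mathbf{a},\mathbf{b}\in S$ and every $i$ with $a_i>b_i$ there is $j$ with $a_j<b_j$ and $\mathbf{a}-\mathbf{e}_i+\mathbf{e}_j\in S$. A homogeneous polynomial $f$ with nonnegative coefficients of degree $d\ge2$ is Lorentzian if: for $d=2$, its Hessian $(\partial_i\partial_jf)_{i,j}$ has at most one positive eigenvalue; for $d>2$, every $\partial_if$ is Lorentzian and $\operatorname{supp}(f)$ is M-convex. *)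

From HB Require Import structures.
From mathcomp Require Import all_boot all_order all_algebra.
From mathcomp Require Import reals.
From mathcomp Require Import mpoly.

Set Implicit Arguments.
Unset Strict Implicit.
Unset Printing Implicit Defensive.

Import Order.TTheory GRing.Theory Num.Theory.
Local Open Scope ring_scope.

Section Defs.
Variable R : realType.

(* Number of positive eigenvalues of a square matrix, counted with
   multiplicity, is at most one: for every finite list of distinct positive
   reals, the sum of their multiplicities as roots of the characteristic
   polynomial is <= 1. *)
Definition at_most_one_pos_eig (m : nat) (M : 'M[R]_m) : Prop :=
  forall s : seq R, uniq s -> all (fun x => 0 < x) s ->
    (\sum_(x <- s) mup x (char_poly M) <= 1)%N.

(* Graph on vertex set 'I_n : symmetric relation, loops allowed. *)
Definition adjmx (n : nat) (e : rel 'I_n) : 'M[R]_n :=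
  \matrix_(i, j) (if e i j then 1 else 0).

Definition antiferromagnetic (n : nat) (e : rel 'I_n) : Prop :=
  at_most_one_pos_eig (adjmx e).

Definition QG (n : nat) (e : rel 'I_n) : {mpoly R[n]} :=
  \sum_(i < n) \sum_(j < n) ((adjmx e i j / 2%:R) *: ('X_i * 'X_j)).

Definition supp (n : nat) (f : {mpoly R[n]}) : pred 'X_{1..n} :=
  fun m => f@_m != 0.

Definition Mconvex (n : nat) (S : pred 'X_{1..n}) : Prop :=
  forall a b, S a -> S b -> forall i : 'I_n, (b i < a i)%N ->
    exists j : 'I_n, (a j < b j)%N /\ S (a - U_(i) + U_(j))%MM.

Definition nonneg_coeffs (n : nat) (f : {mpoly R[n]}) : Prop :=
  forall m, 0 <= f@_m.

(* Hessian of a quadratic form: its second partial derivatives are constants;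
   we take their constant coefficients. *)
Definition hessian (n : nat) (f : {mpoly R[n]}) : 'M[R]_n :=
  \matrix_(i, j) (mderiv i (mderiv j f))@_0%MM.

Fixpoint lorentzian (n : nat) (d : nat) (f : {mpoly R[n]}) {struct d} : Prop :=
  [/\ nonneg_coeffs f, f \is d.-homog &
    match d with
    | 0 => False
    | d'.+1 =>
        if d' == 0%N then False
        else if d' == 1%N then at_most_one_pos_eig (hessian f)
        else (forall i : 'I_n, lorentzian d' (mderiv i f)) /\ Mconvex (supp f)
    end].

(* V induces a complete multipartite graph without loops: vertices of V are
   labelled by parts, and two vertices of V are adjacent iff they lie in
   different parts. *)
Definition complete_multipartite_on (n : nat) (e : rel 'I_n) (V : {set 'I_n}) : Prop :=
  exists part : 'I_n -> nat, forall x y, x \in V -> y \in V -> e x y = (part x != part y).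

End Defs.

From HB Require Import structures.
From mathcomp Require Import all_boot all_order all_algebra.
From mathcomp Require Import reals.
From mathcomp Require Import mpoly.
From mathcomp Require Import complex.
From mathcomp Require Import ring lra.

(* All four conditions are equivalent to transitivity of non-adjacency in G.
   By the spectral theorem over R[i], a real symmetric matrix has at most one
   positive eigenvalue iff its form is positive definite on no plane; such a
   form B then satisfies the reverse Cauchy-Schwarz inequality
   B(u,u) B(v,v) <= B(u,v)^2 whenever B(u,u) > 0, and indicator vectors built
   from a looped non-universal vertex or from a non-transitive triple violate
   it (this is where isolated vertices are excluded).  Conversely, if
   non-adjacency is transitive it is a partial equivalence relation, so
   A_G = J - N with N positive semidefinite: the form is nonpositive on the
   hyperplane sum x = 0, leaving room for at most one positive eigenvalue.
   The Hessian of Q_G is A_G, and the support of Q_G is {e_i + e_j | ij an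
   edge}, whose exchange property is again equivalent to transitivity of
   non-adjacency.  Finally, transitive non-adjacency splits V(G) into the
   universal (looped) vertices and the non-adjacency classes of the others. *)

Set Implicit Arguments.
Unset Strict Implicit.
Unset Printing Implicit Defensive.

Import Order.TTheory GRing.Theory Num.Theory.
Local Open Scope ring_scope.
Local Open Scope sesquilinear_scope.

Lemma char_poly_similar (F : fieldType) n (P M : 'M[F]_n) :
  P \in unitmx -> char_poly (invmx P *m M *m P) = char_poly M.
Proof.
move=> Pu; rewrite /char_poly /char_poly_mx.
set P' := map_mx polyC P.
have P'u : P' \in unitmx by rewrite map_unitmx.
have -> : 'X%:M - map_mx polyC (invmx P *m M *m P) =
    invmx P' *m ('X%:M - map_mx polyC M) *m P'.
  rewrite !map_mxM map_invmx mulmxBr mulmxBl; congr (_ - _).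
  by rewrite mul_mx_scalar -scalemxAl mulVmx // scalemx1.
by rewrite !det_mulmx mulrC mulrA -det_mulmx mulmxV // det1 mul1r.
Qed.

Lemma mup_map_poly (F K : fieldType) (f : {rmorphism F -> K}) (q : {poly F}) x :
  q != 0 -> mup (f x) (map_poly f q) = mup x q.
Proof.
move=> q0; have fq0 : map_poly f q != 0 by rewrite map_poly_eq0.
apply/eqP; rewrite eqn_leq; apply/andP; split.
  by rewrite mup_geq // -(dvdp_map f) rmorphXn /= map_polyXsubC -mup_geq.
by rewrite mup_geq // -map_polyXsubC -rmorphXn dvdp_map -mup_geq.
Qed.

Lemma exists_nontrivial_root (K : comNzRingType) (x y : K) :
  exists a b : K, ((a != 0) || (b != 0)) /\ a * x + b * y = 0.
Proof.
have [y0|y0] := eqVneq y 0.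
  by exists 0, 1; rewrite oner_eq0 orbT y0 mul0r mulr0 addr0.
by exists y, (- x); rewrite y0 mulNr mulrC subrr.
Qed.

Section HermitianForm.
Variables (C : numClosedFieldType) (n : nat).

Definition sform (M : 'M[C]_n) (u v : 'rV[C]_n) : C := (u *m M *m v ^t*) 0 0.

(* The number of positive eigenvalues, with multiplicity, when M is normal. *)
Definition num_pos_eig (M : 'M[C]_n) : nat :=
  #|[pred i | 0 < spectral_diag M 0 i]|.

Lemma sform_comb M u v a b :
  sform M (a *: u + b *: v) (a *: u + b *: v) =
  a * a^* * sform M u u + a * b^* * sform M u v
  + b * a^* * sform M v u + b * b^* * sform M v v.
Proof.
rewrite /sform !linearD !linearZ /= !map_mxD !map_mxZ.
by rewrite !mulmxDl !mulmxDr -!scalemxAl -!scalemxAr !mxE; ring.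
Qed.

Variable M : 'M[C]_n.
Hypothesis M_herm : M \is hermsymmx.
Local Notation P := (spectralmx M).
Local Notation d := (spectral_diag M).

Lemma hermsymmx_tC : M ^t* = M.
Proof. by have := is_hermitianmxP _ _ _ M_herm; rewrite expr0 scale1r. Qed.

Lemma sform_conj u v : sform M v u = (sform M u v)^*.
Proof.
rewrite /sform; have -> : v *m M *m u ^t* = (u *m M *m v ^t*) ^t*.
  by rewrite !trmx_mul !map_mxM trmxCK hermsymmx_tC mulmxA.
by rewrite !mxE.
Qed.

Lemma spectral_hermitian : M = P ^t* *m diag_mx d *m P.
Proof.
have /orthomx_spectralP {1}-> := hermitian_normalmx M_herm.
by rewrite invmx_unitary // spectral_unitarymx.
Qed.

Lemma spectral_diag_real i : d 0 i \is Num.real.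
Proof. by have /mxOverP := hermitian_spectral_diag_real M_herm; apply. Qed.

Lemma char_poly_hermitian : char_poly M = \prod_i ('X - (d 0 i)%:P).
Proof.
rewrite {1}spectral_hermitian -invmx_unitary ?spectral_unitarymx //.
rewrite char_poly_similar ?spectral_unit // char_poly_trig ?diag_mx_is_trig //.
by apply: eq_bigr => i _; rewrite mxE eqxx mulr1n.
Qed.

Lemma sform_spectral w :
  sform M w w = \sum_i d 0 i * `|(w *m P ^t*) 0 i| ^+ 2.
Proof.
rewrite /sform {1}spectral_hermitian.
have -> : w *m (P ^t* *m diag_mx d *m P) *m w ^t* =
    (w *m P ^t*) *m diag_mx d *m (w *m P ^t*) ^t*.
  by rewrite trmx_mul map_mxM trmxCK !mulmxA.
by rewrite mxE; apply: eq_bigr => i _; rewrite mul_mx_diag !mxE normCK; ring.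
Qed.

Lemma sform_le0 w :
  (forall i, 0 < d 0 i -> (w *m P ^t*) 0 i = 0) -> sform M w w <= 0.
Proof.
move=> w0; rewrite sform_spectral; apply: sumr_le0 => i _.
have [di_gt0|di_le0] := boolP (0 < d 0 i).
  by rewrite w0 // normr0 expr0n mulr0.
apply: mulr_le0_ge0; last exact: exprn_ge0.
by rewrite real_leNgt ?spectral_diag_real ?real0.
Qed.

Lemma num_pos_eig_le1_plane : (num_pos_eig M <= 1)%N ->
  forall u v, exists a b, ((a != 0) || (b != 0)) /\
    sform M (a *: u + b *: v) (a *: u + b *: v) <= 0.
Proof.
move=> /card_le1_eqP pos1 u v.
have coordE a b i : ((a *: u + b *: v) *m P ^t*) 0 i =
    a * (u *m P ^t*) 0 i + b * (v *m P ^t*) 0 i.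
  by rewrite mulmxDl -!scalemxAl !mxE.
case: (pickP [pred i | 0 < d 0 i]) => [k dk | nopos]; last first.
  exists 1, 0; split; first by rewrite oner_eq0.
  by apply: sform_le0 => i di; move: (nopos i); rewrite /= di.
have [a [b [ab abk]]] := exists_nontrivial_root ((u *m P ^t*) 0 k) ((v *m P ^t*) 0 k).
exists a, b; split => //; apply: sform_le0 => i di.
by rewrite coordE (pos1 k i).
Qed.

Lemma num_pos_eig_gt1_plane : (1 < num_pos_eig M)%N ->
  exists u v, forall a b, (a != 0) || (b != 0) ->
    0 < sform M (a *: u + b *: v) (a *: u + b *: v).
Proof.
case/card_gt1P => k [l [dk dl kl]]; rewrite !inE in dk dl.
exists (row k P), (row l P) => a b ab.
have rowK j : row j P *m P ^t* = row j 1%:M.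
  by rewrite -row_mul (unitarymxP (spectral_unitarymx M)).
rewrite sform_spectral mulmxDl -!scalemxAl !rowK.
rewrite (bigD1 k) //= (bigD1 l) 1?eq_sym //= big1 ?addr0; last first.
  move=> i /andP[ik il]; rewrite !mxE [k == i]eq_sym [l == i]eq_sym.
  by rewrite (negbTE ik) (negbTE il) !mulr0 addr0 normr0 expr0n mulr0.
rewrite !mxE !eqxx [l == k]eq_sym (negbTE kl) /= !mulr1 !mulr0 addr0 add0r.
have normX_ge0 (x : C) : 0 <= `|x| ^+ 2 by exact: exprn_ge0.
have normX_gt0 (x : C) : x != 0 -> 0 < `|x| ^+ 2.
  by move=> x0; rewrite exprn_gt0 ?normr_gt0.
case/orP: ab => [a0|b0].
  exact: ltr_wpDr (mulr_ge0 (ltW dl) (normX_ge0 _)) (mulr_gt0 dk (normX_gt0 _ a0)).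
exact: ltr_wpDl (mulr_ge0 (ltW dk) (normX_ge0 _)) (mulr_gt0 dl (normX_gt0 _ b0)).
Qed.

Lemma sform_comb_gt0 u v a b : 0 < sform M u u ->
  `|sform M u v| ^+ 2 < sform M u u * sform M v v ->
  (a != 0) || (b != 0) -> 0 < sform M (a *: u + b *: v) (a *: u + b *: v).
Proof.
set al := sform M u u; set be := sform M u v; set ga := sform M v v.
move=> al_gt0 disc ab.
have alC : al^* = al by rewrite /al -sform_conj.
have square : al * sform M (a *: u + b *: v) (a *: u + b *: v) =
    `|al * a + be^* * b| ^+ 2 + (al * ga - `|be| ^+ 2) * `|b| ^+ 2.
  rewrite sform_comb (sform_conj u v) -/al -/be -/ga !normCK.
  by rewrite rmorphD !rmorphM /= (conjCK be) alC; ring.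
rewrite -(pmulr_rgt0 _ al_gt0) square.
have [b0|b0] := eqVneq b 0.
  rewrite b0 eqxx orbF in ab.
  apply: ltr_wpDr; first by rewrite b0 normr0 expr0n mulr0.
  by rewrite b0 mulr0 addr0 exprn_gt0 // normr_gt0 mulf_neq0 // gt_eqF.
apply: ltr_wpDl; first exact: exprn_ge0.
by rewrite mulr_gt0 ?subr_gt0 // exprn_gt0 // normr_gt0.
Qed.

Lemma sform_reverse_CS u v : (num_pos_eig M <= 1)%N -> 0 < sform M u u ->
  sform M u u * sform M v v <= `|sform M u v| ^+ 2.
Proof.
move=> pos1 uu_gt0.
have real_sform w : sform M w w \is Num.real by rewrite CrealE -sform_conj.
rewrite real_leNgt ?realM ?real_sform ?realX ?normr_real //; apply/negP => disc.
have [a [b [ab]]] := num_pos_eig_le1_plane pos1 u v.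
by rewrite (lt_geF (sform_comb_gt0 uu_gt0 disc ab)).
Qed.

Lemma num_pos_eig_le1_hyperplane (c : 'cV[C]_n) :
  (forall w, (w *m c) 0 0 = 0 -> sform M w w <= 0) -> (num_pos_eig M <= 1)%N.
Proof.
move=> nonpos; rewrite leqNgt; apply/negP => /num_pos_eig_gt1_plane [u [v pos]].
have [a [b [ab abc]]] := exists_nontrivial_root ((u *m c) 0 0) ((v *m c) 0 0).
have /nonpos : ((a *: u + b *: v) *m c) 0 0 = 0.
  by rewrite -abc mulmxDl -!scalemxAl !mxE.
by rewrite (lt_geF (pos a b ab)).
Qed.

End HermitianForm.

Lemma sform_partial_equiv_ge0 (C : numClosedFieldType) n (r : rel 'I_n)
    (w : 'rV[C]_n) :
  (forall i j, r i j = r j i) -> transitive r ->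
  0 <= sform (\matrix_(i, j) (r i j)%:R) w w.
Proof.
(* The form is the sum, over the classes X of r, of |\sum_(j in X) w_j|^2. *)
move=> r_sym r_tr.
pose cls i := [set j | r i j]; pose S (X : {set 'I_n}) := \sum_(j in X) w 0 j.
have -> : sform (\matrix_(i, j) (r i j)%:R) w w = \sum_i w 0 i * (S (cls i))^*.
  rewrite /sform mxE; under eq_bigr do rewrite !mxE mulr_suml.
  rewrite exchange_big; apply: eq_bigr => i _; rewrite rmorph_sum mulr_sumr.
  rewrite (big_mkcond (fun j => j \in cls i)); apply: eq_bigr => j _.
  by rewrite !mxE inE; case: (r i j); rewrite ?mulr1 ?mulr0 ?mul0r.
rewrite (partition_big_imset cls) /=; apply: sumr_ge0 => _ /imsetP[k _ ->].
rewrite (eq_bigr (fun i => w 0 i * (S (cls k))^*)); last by move=> i /eqP ->.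
rewrite -mulr_suml; have [rkk|nrkk] := boolP (r k k); last first.
  have -> : cls k = set0.
    apply/setP => j; rewrite !inE; apply: contraNF nrkk => rkj.
    by rewrite (r_tr j) // r_sym.
  by rewrite /S big_set0 rmorph0 mulr0.
have -> : \sum_(i | cls i == cls k) w 0 i = S (cls k).
  apply: eq_bigl => i; apply/eqP/idP => [cls_ik|]; rewrite inE.
    by move/setP/(_ k): cls_ik; rewrite !inE rkk r_sym => ->.
  move=> rki; apply/setP => j; rewrite !inE; apply/idP/idP => [rij|rkj].
    exact: r_tr rki rij.
  by apply: (r_tr k) rkj; rewrite r_sym.
exact: mul_conjC_ge0.
Qed.

Lemma sum_card_fibers (I : finType) (T : eqType) (f : I -> T) (s : seq T) :
  uniq s -> \sum_(x <- s) #|[pred i | f i == x]| = #|[pred i | f i \in s]|.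
Proof.
elim: s => [_|x s IHs /= /andP[xs s_uniq]].
  by rewrite big_nil; apply/esym/eq_card0.
rewrite big_cons IHs // -(cardID [pred i | f i == x] [pred i | f i \in x :: s]).
congr (_ + _); apply: eq_card => i; rewrite !inE.
  by case: eqP; rewrite ?andbF.
by case: eqP => [->|]; rewrite ?(negbTE xs).
Qed.

Section BilinearForm.
Variables (K : comPzRingType) (n : nat) (A : 'M[K]_n).

Definition bform (u v : 'rV[K]_n) : K := (u *m A *m v^T) 0 0.

Lemma bformDl u1 u2 v : bform (u1 + u2) v = bform u1 v + bform u2 v.
Proof. by rewrite /bform !mulmxDl mxE. Qed.

Lemma bformDr u v1 v2 : bform u (v1 + v2) = bform u v1 + bform u v2.
Proof. by rewrite /bform linearD mulmxDr mxE. Qed.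

Lemma bformZl a u v : bform (a *: u) v = a * bform u v.
Proof. by rewrite /bform -!scalemxAl mxE. Qed.

Lemma bformZr a u v : bform u (a *: v) = a * bform u v.
Proof. by rewrite /bform linearZ -scalemxAr mxE. Qed.

Lemma bform_delta i j : bform (delta_mx 0 i) (delta_mx 0 j) = A i j.
Proof. by rewrite /bform trmx_delta -rowE -colE !mxE. Qed.

End BilinearForm.

Lemma conjC_real_complex (R : rcfType) (x : R) :
  (real_complex R x)^* = real_complex R x.
Proof. by apply: conj_Creal; apply/complex_realP; exists x. Qed.

Section RealSymmetric.
Variables (R : realType) (n : nat) (A : 'M[R]_n).
Hypothesis A_sym : A^T = A.
Local Notation toC := (real_complex R).
Local Notation AC := (map_mx toC A).
Local Notation d i := (spectral_diag AC 0 i).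
Local Notation ev i := (complex.Re (d i)).

Lemma realsym_hermsymmx : AC \is hermsymmx.
Proof.
apply/is_hermitianmxP; rewrite expr0 scale1r; apply/matrixP => i j.
by rewrite !mxE conjC_real_complex -[in RHS]A_sym mxE.
Qed.

Lemma spectral_diag_RRe i : toC (ev i) = d i.
Proof. exact/RRe_real/spectral_diag_real/realsym_hermsymmx. Qed.

Lemma mup_char_poly_realsym x :
  mup x (char_poly A) = #|[pred i | ev i == x]|.
Proof.
rewrite -(mup_map_poly toC) ?monic_neq0 ?char_poly_monic //.
rewrite map_char_poly char_poly_hermitian ?realsym_hermsymmx //.
rewrite -(big_map (fun i => d i) xpredT (fun y => 'X - y%:P)).
rewrite mu_prod_XsubC count_map -sum1_count -sum1_card.
apply: eq_bigl => i; rewrite !inE -spectral_diag_RRe /=.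
by rewrite (inj_eq (@complexI R)).
Qed.

Lemma at_most_one_pos_eigE : at_most_one_pos_eig A <-> (num_pos_eig AC <= 1)%N.
Proof.
have pos_Re i : (0 < ev i) = (0 < d i).
  by rewrite -ltcR rmorph0 spectral_diag_RRe.
split => [AF | pos1 s s_uniq s_pos].
  pose s := undup [seq ev i | i <- enum [pred i | 0 < d i]].
  have s_pos : all (fun x => 0 < x) s.
    apply/allP => x; rewrite mem_undup; case/mapP => i.
    by rewrite mem_enum inE -pos_Re => ? ->.
  have := AF s (undup_uniq _) s_pos.
  under eq_bigr do rewrite mup_char_poly_realsym.
  rewrite sum_card_fibers ?undup_uniq //; congr (_ <= _)%N; apply: eq_card => i.
  rewrite !inE mem_undup; apply/mapP/idP => [[j] | di]; last first.
    by exists i; rewrite ?mem_enum.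
  by rewrite mem_enum !inE -!pos_Re => dj ->.
under eq_bigr do rewrite mup_char_poly_realsym.
rewrite sum_card_fibers //; apply: leq_trans pos1; apply: subset_leq_card.
by apply/subsetP => i; rewrite !inE -pos_Re => /(allP s_pos).
Qed.

Lemma sform_realsym (u v : 'rV[R]_n) :
  sform AC (map_mx toC u) (map_mx toC v) = toC (bform A u v).
Proof.
rewrite /sform /bform; have -> : (map_mx toC v) ^t* = map_mx toC v^T.
  by apply/matrixP => i j; rewrite !mxE conjC_real_complex.
by rewrite -!map_mxM mxE.
Qed.

Lemma at_most_one_pos_eig_reverse_CS (u v : 'rV[R]_n) : at_most_one_pos_eig A ->
  0 < bform A u u -> bform A u u * bform A v v <= bform A u v ^+ 2.
Proof.
move=> /at_most_one_pos_eigE pos1 uu_gt0.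
have := @sform_reverse_CS _ _ _ realsym_hermsymmx (map_mx toC u) (map_mx toC v) pos1.
rewrite !sform_realsym normCK conjC_real_complex -!rmorphM -expr2 lecR; apply.
by rewrite -(rmorph0 toC) ltcR.
Qed.

Lemma at_most_one_pos_eig_hyperplane (c : 'cV[R[i]]_n) :
  (forall w, (w *m c) 0 0 = 0 -> sform AC w w <= 0) -> at_most_one_pos_eig A.
Proof.
move=> nonpos; apply/at_most_one_pos_eigE.
exact/(num_pos_eig_le1_hyperplane realsym_hermsymmx nonpos).
Qed.

End RealSymmetric.

Lemma mnm_addU n (i j q : 'I_n) : (U_(i) + U_(j))%MM q = ((i == q) + (j == q))%N.
Proof. by rewrite mnmDE !mnm1E. Qed.

Lemma addU_eq n (i j a b : 'I_n) :
  ((U_(i) + U_(j))%MM == (U_(a) + U_(b))%MM) =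
  ((i == a) && (j == b)) || ((i == b) && (j == a)).
Proof.
apply/eqP/idP => [E|]; last by case/orP => /andP[/eqP -> /eqP ->] //; rewrite addmC.
have Ei := congr1 (fun m : 'X_{1..n} => m i) E; rewrite /= !mnm_addU eqxx in Ei.
have [ai|ai] := eqVneq a i.
  subst a; move/addmI: E => /(congr1 (fun m : 'X_{1..n} => m j)).
  by rewrite !mnm1E eqxx; case: (eqVneq b j).
have [bi|bi] := eqVneq b i; last by move: Ei; rewrite (negbTE ai) (negbTE bi).
subst b; rewrite [RHS]addmC in E; move/addmI: E => /(congr1 (fun m : 'X_{1..n} => m j)).
by rewrite !mnm1E eqxx; case: (eqVneq a j); rewrite ?orbT.
Qed.

Section QuadraticForm.
Variables (R : realType) (n : nat) (e : rel 'I_n).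
Hypothesis e_sym : forall x y, e x y = e y x.
Local Notation A := (adjmx R e).
Local Notation Q := (QG R e).

Lemma adjmxE x y : A x y = (e x y)%:R.
Proof. by rewrite mxE; case: (e x y). Qed.

Lemma QG_coef m :
  Q@_m = \sum_i \sum_j A i j / 2%:R * ((U_(i) + U_(j))%MM == m)%:R.
Proof.
rewrite /QG raddf_sum; apply: eq_bigr => i _; rewrite raddf_sum.
by apply: eq_bigr => j _; rewrite /= mcoeffZ -mpolyXD mcoeffX.
Qed.

Lemma QG_coefU a b : Q@_(U_(a) + U_(b)) = if a == b then A a a / 2%:R else A a b.
Proof.
have delta F c c' :
    \sum_(i < n) \sum_(j < n) F i j * ((i == c) && (j == c'))%:R = F c c' :> R.
  rewrite (bigD1 c) //= [X in _ + X]big1 => [|i ic]; last first.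
    by apply: big1 => j _; rewrite (negbTE ic) mulr0.
  rewrite addr0 (bigD1 c') //= [X in _ + X]big1 => [|j jc]; last first.
    by rewrite (negbTE jc) andbF mulr0.
  by rewrite !eqxx mulr1 !addr0.
rewrite QG_coef; under eq_bigr do under eq_bigr do rewrite addU_eq.
have [<-|ab] := eqVneq a b.
  by under eq_bigr do under eq_bigr do rewrite orbb; rewrite delta.
transitivity (\sum_i \sum_j (A i j / 2%:R * ((i == a) && (j == b))%:R +
                             A i j / 2%:R * ((i == b) && (j == a))%:R)).
  apply: eq_bigr => i _; apply: eq_bigr => j _; rewrite -mulrDr -natrD.
  by have [->|_] := eqVneq i a; rewrite ?(negbTE ab) /= ?orbF ?addn0.
under eq_bigr do rewrite big_split; rewrite big_split /= !delta !adjmxE e_sym.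
by case: (e a b) => /=; lra.
Qed.

Lemma supp_QGE i j : supp Q (U_(i) + U_(j))%MM = e i j.
Proof.
rewrite /supp QG_coefU; have [<-|_] := eqVneq i j; rewrite adjmxE; case: (e _ _).
- by rewrite mulf_neq0 ?oner_eq0 ?invr_eq0 ?pnatr_eq0.
- by rewrite mul0r eqxx.
- by rewrite oner_eq0.
- by rewrite eqxx.
Qed.

Lemma supp_QG_addU m : supp Q m -> exists i j, m = (U_(i) + U_(j))%MM.
Proof.
case: (pickP (fun ij : 'I_n * 'I_n => m == (U_(ij.1) + U_(ij.2))%MM)).
  by move=> [i j] /eqP ->; exists i, j.
move=> noU; rewrite /supp QG_coef big1 ?eqxx // => i _; rewrite big1 // => j _.
by move: (noU (i, j)); rewrite /= eq_sym => ->; rewrite mulr0.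
Qed.

Lemma QG_nonneg : nonneg_coeffs Q.
Proof.
move=> m; rewrite QG_coef; apply: sumr_ge0 => i _; apply: sumr_ge0 => j _.
by rewrite adjmxE mulr_ge0 ?divr_ge0 ?ler0n.
Qed.

Lemma QG_homog : Q \is 2.-homog.
Proof.
apply/dhomogP => m; rewrite mcoeff_msupp => /supp_QG_addU [i [j ->]].
by have := mdegD (U_(i))%MM (U_(j))%MM; rewrite !mdeg1.
Qed.

Lemma hessian_QG : hessian Q = A.
Proof.
apply/matrixP => i j; rewrite mxE !mcoeff_mderiv add0m mnm0E mnm1E QG_coefU /=.
have [<-|_] := eqVneq i j; last by rewrite mulr1n.
by rewrite mulr1n adjmxE mulr2n; case: (e i i) => /=; lra.
Qed.

Lemma lorentzian2_QG : lorentzian 2 Q <-> antiferromagnetic R e.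
Proof.
rewrite /= hessian_QG; split => [[] //|AF].
by split; [exact: QG_nonneg | exact: QG_homog |].
Qed.

End QuadraticForm.

Section Graph.
Variables (R : realType) (n : nat) (e : rel 'I_n).
Hypothesis e_sym : forall x y, e x y = e y x.
Hypothesis no_isolated : forall i, exists j, e i j.
Local Notation A := (adjmx R e).
Local Notation Q := (QG R e).
Local Notation nonadj := [rel x y | ~~ e x y].

Definition multipartite_split : Prop :=
  exists V1 V2 : {set 'I_n},
    [/\ [disjoint V1 & V2], V1 :|: V2 = setT, complete_multipartite_on e V1 &
        forall v, v \in V2 -> e v v /\ forall u : 'I_n, e v u].

Lemma adjmx_sym : A^T = A.
Proof. by apply/matrixP => i j; rewrite !mxE e_sym. Qed.

Lemma nonadj_transitive_loop_universal :
  transitive nonadj -> forall x y, e x x -> e x y.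
Proof.
move=> tr x y exx; apply: contraTT exx => nxy.
by have /= := tr y x x nxy; rewrite e_sym; apply.
Qed.

Lemma antiferromagnetic_nonadj_transitive :
  antiferromagnetic R e -> transitive nonadj.
Proof.
move=> AF; pose dl i : 'rV[R]_n := delta_mx 0 i.
have CS u v := at_most_one_pos_eig_reverse_CS (u := u) adjmx_sym v AF.
(* In both steps w is a neighbour of y, and the two test vectors violate the
   reverse Cauchy-Schwarz inequality. *)
have loop_univ x y : e x x -> e x y.
  move=> exx; apply: contraTT isT => nxy.
  have [w eyw] := no_isolated y; have ewy : e w y by rewrite e_sym.
  have := CS (dl x) (dl y + dl w).
  rewrite !(bformDl, bformDr, bform_delta, adjmxE) exx (negbTE nxy) eyw ewy.
  by case: (e y y); case: (e w w); case: (e x w) => /=; lra.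
have nloop u v : ~~ e u v -> ~~ e u u by apply: contra => /loop_univ.
move=> y x z /= nxy nyz; apply: contraTN isT => exz.
have nzy : ~~ e z y by rewrite e_sym.
have [w eyw] := no_isolated y; have ewy : e w y by rewrite e_sym.
have := CS (dl x + dl z) (2%:R *: dl y + dl w).
rewrite !(bformDl, bformDr, bformZl, bformZr, bform_delta, adjmxE).
rewrite exz [e z x]e_sym exz eyw ewy (negbTE nxy) (negbTE nzy).
rewrite (negbTE (nloop _ _ nxy)) (negbTE (nloop _ _ nyz)) (negbTE (nloop _ _ nzy)).
by case: (e x w); case: (e z w); case: (e w w) => /=; lra.
Qed.

Lemma nonadj_transitive_antiferromagnetic :
  transitive nonadj -> antiferromagnetic R e.
Proof.
move=> tr; apply: (at_most_one_pos_eig_hyperplane adjmx_sym (c := const_mx 1)).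
move=> w w1; pose N := \matrix_(i, j) ((~~ e i j)%:R : R[i]).
have AE : map_mx (real_complex R) A = const_mx 1 - N.
  apply/matrixP => i j; rewrite !mxE.
  by case: (e i j); rewrite ?rmorph1 ?rmorph0 ?subr0 ?subrr.
have wJ : w *m const_mx 1 = 0 :> 'rV_n.
  apply/matrixP => i j; rewrite ord1 [RHS]mxE -[RHS]w1 !mxE.
  by apply: eq_bigr => k _; rewrite !mxE.
rewrite /sform AE mulmxBr mulmxBl wJ mul0mx sub0r mxE oppr_le0.
apply: sform_partial_equiv_ge0 => [x y|]; last exact: tr.
by rewrite e_sym.
Qed.

Lemma Mconvex_QG_exchange s w k l : Mconvex (supp Q) ->
  e s w -> e k l -> w != k -> w != l -> e s k || e s l.
Proof.
move=> MC esw ekl wk wl.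
have lt_w : ((U_(k) + U_(l))%MM w < (U_(s) + U_(w))%MM w)%N.
  by rewrite !mnm_addU eqxx eq_sym (negbTE wk) eq_sym (negbTE wl) addn1.
have supp_sw : supp Q (U_(s) + U_(w))%MM by rewrite supp_QGE.
have supp_kl : supp Q (U_(k) + U_(l))%MM by rewrite supp_QGE.
have [q [lt_q]] := MC _ _ supp_sw supp_kl w lt_w.
rewrite addmK supp_QGE // => esq.
have /orP[] : (k == q) || (l == q).
  by move: lt_q; rewrite !mnm_addU; case: (k == q); case: (l == q); rewrite ?ltn0.
all: by move=> /eqP ->; rewrite esq ?orbT.
Qed.

Lemma Mconvex_nonadj_transitive : Mconvex (supp Q) -> transitive nonadj.
Proof.
move=> MC y x z /= nxy nyz; apply: contraTN isT => exz.
have [w eyw] := no_isolated y.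
have wx : w != x by apply: contraNneq nxy => <-; rewrite e_sym.
have wz : w != z by apply: contraNneq nyz => <-.
by have := Mconvex_QG_exchange MC eyw exz wx wz; rewrite e_sym (negbTE nxy) (negbTE nyz).
Qed.

Lemma nonadj_transitive_exchange i j k l : transitive nonadj ->
  e i j -> e k l -> ((U_(k) + U_(l))%MM i < (U_(i) + U_(j))%MM i)%N ->
  exists2 q, ((U_(i) + U_(j))%MM q < (U_(k) + U_(l))%MM q)%N & e j q.
Proof.
move=> tr eij ekl; have univ := nonadj_transitive_loop_universal tr.
have fresh q : q != i -> q != j -> (q == k) || (q == l) ->
    ((U_(i) + U_(j))%MM q < (U_(k) + U_(l))%MM q)%N.
  move=> qi qj; rewrite !mnm_addU ![_ == q]eq_sym (negbTE qi) (negbTE qj).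
  by case/orP => ->; rewrite ?addn1.
rewrite !mnm_addU eqxx; have [ji|ji] := eqVneq j i.
  subst j; have [ki|ki] := eqVneq k i => lt_i.
    have li : l != i by apply: contraTneq lt_i => ->; rewrite eqxx.
    by exists l; [rewrite fresh ?eqxx ?orbT | rewrite univ].
  by exists k; [rewrite fresh ?eqxx | rewrite univ].
rewrite addn0 ltnS leqn0 addn_eq0 !eqb0 => /andP[ki li].
have [kl|kl] := eqVneq k l.
  exists k; last by rewrite e_sym univ // {2}kl.
  by rewrite !mnm_addU kl eqxx [i == l]eq_sym (negbTE li); case: (j == l).
have [kj|kj] := eqVneq k j.
  by exists l; [rewrite fresh ?eqxx ?orbT // -kj eq_sym | rewrite -kj].
have [lj|lj] := eqVneq l j.
  by exists k; [rewrite fresh ?eqxx | rewrite -lj e_sym].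
have /orP[ejk|ejl] : e j k || e j l.
  apply: contraTT ekl; rewrite negb_or => /andP[njk njl].
  by apply: (tr j); rewrite //= e_sym.
- by exists k; rewrite ?fresh ?eqxx.
- by exists l; rewrite ?fresh ?eqxx ?orbT.
Qed.

Lemma nonadj_transitive_Mconvex : transitive nonadj -> Mconvex (supp Q).
Proof.
move=> tr a b supp_a supp_b p.
have [i [j a_ij]] := supp_QG_addU supp_a; have [k [l b_kl]] := supp_QG_addU supp_b.
subst a b; rewrite !supp_QGE // in supp_a supp_b.
wlog ip : i j supp_a / i = p => [wlog_p lt_p|lt_p].
  have /orP[] : (i == p) || (j == p).
    move: lt_p; rewrite !mnm_addU.
    by case: (i == p); case: (j == p) => //=; rewrite addn0 ltn0.
  - by move=> /eqP ip; apply: wlog_p.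
  move=> /eqP jp; rewrite [(U_(i) + _)%MM]addmC in lt_p *.
  by apply: wlog_p; rewrite // e_sym.
subst i; have [q lt_q ejq] := nonadj_transitive_exchange tr supp_a supp_b lt_p.
by exists q; split => //; rewrite [(U_(p) + _)%MM]addmC addmK supp_QGE.
Qed.

Lemma nonadj_transitive_split : transitive nonadj -> multipartite_split.
Proof.
move=> tr; have univ := nonadj_transitive_loop_universal tr.
pose V2 := [set v | [forall u, e v u]].
exists (~: V2), V2; split.
- by rewrite disjoints_subset subxx.
- by rewrite setUC setUCr.
- exists (fun x => val (enum_rank [set y | ~~ e x y])) => x y.
  rewrite !inE => /forallPn[x' nxx'] /forallPn[y' nyy'].
  rewrite val_eqE (inj_eq enum_rank_inj).
  have nxx : ~~ e x x by apply: contra nxx' => /univ.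
  case: (boolP (e x y)) => [exy|nxy].
    by apply/esym/eqP => /setP/(_ x); rewrite !inE nxx e_sym exy.
  apply/esym/negbF/eqP/setP => z; rewrite !inE.
  apply/idP/idP => [nxz|nyz]; first by apply: (tr x); rewrite //= e_sym.
  exact: (tr y) nxy nyz.
- by move=> v; rewrite inE => /forallP v_univ; split.
Qed.

Lemma split_nonadj_transitive : multipartite_split -> transitive nonadj.
Proof.
case=> V1 [V2 [_ V12 [part partE] V2_univ]] y x z /= nxy nyz.
have inV1 u v : ~~ e u v -> u \in V1.
  move=> nuv; apply: contraR nuv => uV1; have : u \in V1 :|: V2 by rewrite V12 inE.
  by rewrite inE (negbTE uV1) => /V2_univ[_ ->].
have nzy : ~~ e z y by rewrite e_sym.
have xV1 := inV1 _ _ nxy; have yV1 := inV1 _ _ nyz; have zV1 := inV1 _ _ nzy.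
by move: nxy nyz; rewrite !partE // !negbK => /eqP -> /eqP ->.
Qed.

End Graph.

Local Close Scope sesquilinear_scope.

Theorem theorem3p2 (R : realType) (n : nat) (e : rel 'I_n)
    (e_sym : forall x y : 'I_n, e x y = e y x)
    (no_isolated : forall i : 'I_n, exists j : 'I_n, e i j) :
  [<-> antiferromagnetic R e;
       lorentzian 2 (QG R e);
       Mconvex (supp (QG R e));
       exists V1 V2 : {set 'I_n},
         [/\ [disjoint V1 & V2], V1 :|: V2 = setT,
             complete_multipartite_on e V1 &
             forall v, v \in V2 -> e v v /\ forall u : 'I_n, e v u]].
Proof.
tfae.
- by move=> AF; apply/lorentzian2_QG.
- move=> /(lorentzian2_QG R e_sym).
  move=> /(antiferromagnetic_nonadj_transitive e_sym no_isolated).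
  exact: nonadj_transitive_Mconvex.
- move=> /(Mconvex_nonadj_transitive e_sym no_isolated).
  exact: nonadj_transitive_split.
- move=> /(split_nonadj_transitive e_sym).
  exact: nonadj_transitive_antiferromagnetic.
Qed.
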